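(* Let $a_0,a_1,a_2,a_3\in\mathbb{R}$ and consider the binary quartic form $$f(x,y)=-x^4+a_3x^3y+a_2x^2y^2+a_1xy^3+a_0y^4 .$$ Let $$b_1=-\tfrac14\,(4a_0+a_2^2+a_1a_3),\qquad b_2=-\tfrac{a_2}{2},\qquad \lambda_0=\frac{4b_2+2\sqrt{3b_1+4b_2^2}}{3}.$$ Then $f$ is negative semi-definite if and only if $\lambda_0$ is real and the matrix $$\begin{bmatrix}-1&\frac{a_3}{2}&\frac{a_2+\lambda_0}{2}\\[2pt] \frac{a_3}{2}&-\lambda_0&\frac{a_1}{2}\\[2pt] \frac{a_2+\lambda_0}{2}&\frac{a_1}{2}&a_0\end{bmatrix}$$ is negative semi-definite. Likewise, $f$ is negative definite if and only if $\lambda_0$ is real and this matrix is negative definite.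
   Context: A binary form $f(x,y)$ with real coefficients is negative definite (resp. negative semi-definite) if $f(x,y)<0$ (resp. $f(x,y)\le 0$) for all real $x,y$ not both zero. The quantity $\lambda_0$ is real exactly when $3b_1+4b_2^2\ge 0$. *)

From HB Require Import structures.
From mathcomp Require Import all_boot all_order all_algebra.
From mathcomp Require Import reals.
Set Implicit Arguments. Unset Strict Implicit. Unset Printing Implicit Defensive.
Import Order.TTheory GRing.Theory Num.Theory.
Local Open Scope ring_scope.

Definition neg_def_form (R : realType) (f : R -> R -> R) : Prop :=
  forall x y : R, (x != 0) || (y != 0) -> f x y < 0.
Definition neg_semidef_form (R : realType) (f : R -> R -> R) : Prop :=
  forall x y : R, (x != 0) || (y != 0) -> f x y <= 0.

Definition neg_def_mx (R : realType) (n : nat) (M : 'M[R]_n) : Prop :=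
  forall v : 'rV[R]_n, v != 0 -> (v *m M *m v^T) 0 0 < 0.
Definition neg_semidef_mx (R : realType) (n : nat) (M : 'M[R]_n) : Prop :=
  forall v : 'rV[R]_n, v != 0 -> (v *m M *m v^T) 0 0 <= 0.

Definition quartic (R : realType) (a0 a1 a2 a3 : R) (x y : R) : R :=
  - x ^+ 4 + a3 * x ^+ 3 * y + a2 * x ^+ 2 * y ^+ 2 + a1 * x * y ^+ 3
  + a0 * y ^+ 4.

Definition b1 (R : realType) (a0 a1 a2 a3 : R) : R :=
  - (4 * a0 + a2 ^+ 2 + a1 * a3) / 4.
Definition b2 (R : realType) (a2 : R) : R := - a2 / 2.

(* The discriminant-like quantity; lambda0 is real iff it is >= 0. *)
Definition disc (R : realType) (a0 a1 a2 a3 : R) : R :=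
  3 * b1 a0 a1 a2 a3 + 4 * b2 a2 ^+ 2.

(* lambda0 (meaningful when disc >= 0, where Num.sqrt is the real root). *)
Definition lambda0 (R : realType) (a0 a1 a2 a3 : R) : R :=
  (4 * b2 a2 + 2 * Num.sqrt (disc a0 a1 a2 a3)) / 3.

Definition Mq (R : realType) (a0 a1 a2 a3 l : R) : 'M[R]_3 :=
  \matrix_(i < 3, j < 3)
    nth 0 (nth [::] [:: [:: -1; a3 / 2; (a2 + l) / 2];
                       [:: a3 / 2; - l; a1 / 2];
                       [:: (a2 + l) / 2; a1 / 2; a0]] i) j.

(* f is negative semi-definite iff p(t) = -f(t, 1) is nonnegative, and p
   attains its minimum at some t0, where p'(t0) = 0 and
   p(t0 + s) = m + e s^2 + c s^3 + s^4 with c^2 <= 4 e and m = p(t0).  After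
   the change of variables adapted to t0, minus the Gram form of M(lambda)
   is a square plus a binary quadratic form, which is positive semi-definite
   whenever lambda + 4 t0^2 - 2 a3 t0 = l with e <= l and
   (l - e)(3 l - e) <= 4 m.  lambda0 is the choice making the last
   inequality an equality; it is real because 4 (3 b1 + 4 b2^2) = e^2 + 12 m.
   Conversely, the Gram form at (x^2, x y, y^2) is f(x, y). *)

From mathcomp Require Import all_boot all_order all_algebra.
From mathcomp Require Import reals topology normedtype derive.
From mathcomp Require Import polyrcf.
From mathcomp Require Import ring lra.
Import Order.TTheory GRing.Theory Num.Theory.
Import numFieldNormedType.Exports.
Set Implicit Arguments. Unset Strict Implicit.
Local Open Scope ring_scope.

Lemma poly_has_min (R : realType) (p : {poly R}) : 0 < lead_coef p -> ~~ odd (size p).-1 ->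
  exists t0, forall t, p.[t0] <= p.[t].
Proof.
move=> lc_gt0 even_deg.
have [sp_le1|sp_gt1] := leqP (size p) 1.
  by exists 0 => t; rewrite [p]size1_polyC // !hornerC.
pose q := p \Po - 'X.
have size_NX : size (- 'X : {poly R}) = 2 by rewrite size_polyN size_polyX.
have lc_q : lead_coef q = lead_coef p.
  rewrite lead_coef_comp ?size_NX // lead_coefN lead_coefX -signr_odd.
  by rewrite (negbTE even_deg) mulr1.
have [n1 p_right] := poly_lim_infty p.[0] lc_gt0 sp_gt1.
have [n2 p_left] : exists n, forall x, n <= x -> p.[0] <= q.[x].
  by apply: poly_lim_infty; rewrite ?lc_q ?size_comp_poly2.
pose K := `|n1| + `|n2|.
have le_NK_K : - K <= K by rewrite /K; have := normr_ge0 n1; have := normr_ge0 n2; lra.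
have [t0 _ t0_min] := EVT_min le_NK_K (continuous_subspaceT (@continuous_horner R p)).
exists t0 => t.
have t0_le0 : p.[t0] <= p.[0].
  by apply: t0_min; rewrite in_itv /=; apply/andP; split; lra.
have [t_in|] := boolP (t \in `[- K, K]); first exact: t0_min.
rewrite in_itv /= negb_and -!ltNge => /orP[t_lt|K_lt].
- apply: le_trans t0_le0 _.
  have -> : p.[t] = q.[- t] by rewrite horner_comp hornerN hornerX opprK.
  by apply: p_left; have := ler_norm n2; have := normr_ge0 n1; rewrite /K in t_lt; lra.
- apply: le_trans t0_le0 _; apply: p_right.
  by have := ler_norm n1; have := normr_ge0 n2; rewrite /K in K_lt; lra.
Qed.

Lemma deriv_root_at_min (R : realFieldType) (p : {poly R}) (t0 : R) :
  (forall t, p.[t0] <= p.[t]) -> p^`().[t0] = 0.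
Proof.
move=> t0_min.
have t0_in : t0 \in `](t0 - 1), (t0 + 1)[ by rewrite in_itv /=; apply/andP; split; lra.
have le_ends : t0 - 1 <= t0 + 1 by lra.
have D_p_t0 := derive1_at_min le_ends (fun t _ => @derivable_horner _ p t) t0_in
  (fun t _ => t0_min t).
by rewrite derivE derive1E; exact: derive_val.
Qed.

Lemma discr_le_of_ge0_off0 (R : rcfType) (b c : R) :
  (forall u, u != 0 -> 0 <= u ^+ 2 + b * u + c) -> b ^+ 2 <= 4 * c.
Proof.
move=> ge0_off0; rewrite leNgt; apply/negP => c_lt.
pose s := Num.sqrt (b ^+ 2 - 4 * c) / 4.
have s_gt0 : 0 < s by rewrite divr_gt0 // sqrtr_gt0 subr_gt0.
have near_vertex_lt0 u : (u + b / 2) ^+ 2 = s ^+ 2 -> u ^+ 2 + b * u + c < 0.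
  rewrite /s expr_div_n sqr_sqrtr; last by rewrite subr_ge0 ltW.
  move=> u_eq; have : u ^+ 2 + b * u + c = (u + b / 2) ^+ 2 - (b ^+ 2 - 4 * c) / 4 by field.
  rewrite u_eq; lra.
have [vs_eq0|vs_neq0] := eqVneq (- (b / 2) + s) 0.
- have neq0 : - (b / 2) - s != 0 by apply/eqP; lra.
  by have := ge0_off0 _ neq0; rewrite leNgt near_vertex_lt0 //; ring.
- by have := ge0_off0 _ vs_neq0; rewrite leNgt near_vertex_lt0 //; ring.
Qed.

Section BinaryQuadratic.
Variable R : realFieldType.
Implicit Types c e l m p q r x y : R.

Lemma quad_form_ge0 p q r x y : 0 <= p -> 0 <= r -> q ^+ 2 <= 4 * p * r ->
  0 <= p * x ^+ 2 + q * x * y + r * y ^+ 2.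
Proof.
move=> p_ge0 r_ge0 discr_le.
have [p0|p_neq0] := eqVneq p 0.
  have q0 : q = 0.
    apply/eqP; rewrite -sqrf_eq0 eq_le sqr_ge0 andbT.
    by move: discr_le; rewrite p0 mulr0 mul0r.
  by rewrite p0 q0 !mul0r !add0r mulr_ge0 ?sqr_ge0.
have p_gt0 : 0 < p by rewrite lt_def p_neq0.
have complete_sq : 4 * p * (p * x ^+ 2 + q * x * y + r * y ^+ 2) =
  (2 * p * x + q * y) ^+ 2 + (4 * p * r - q ^+ 2) * y ^+ 2 by ring.
have : 0 <= 4 * p * (p * x ^+ 2 + q * x * y + r * y ^+ 2).
  by rewrite complete_sq addr_ge0 ?sqr_ge0 // mulr_ge0 ?sqr_ge0 ?subr_ge0.
by rewrite pmulr_rge0 // mulr_gt0.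
Qed.

Lemma quad_form_gt0 p q r x y : 0 < p -> q ^+ 2 < 4 * p * r -> (x != 0) || (y != 0) ->
  0 < p * x ^+ 2 + q * x * y + r * y ^+ 2.
Proof.
move=> p_gt0 discr_lt xy_neq0.
have complete_sq : 4 * p * (p * x ^+ 2 + q * x * y + r * y ^+ 2) =
  (2 * p * x + q * y) ^+ 2 + (4 * p * r - q ^+ 2) * y ^+ 2 by ring.
have four_p_gt0 : 0 < 4 * p by rewrite mulr_gt0.
have [y0|y_neq0] := eqVneq y 0.
  move: xy_neq0; rewrite y0 eqxx orbF => x_neq0.
  by rewrite !mulr0 expr0n mulr0 !addr0 mulr_gt0 // exprn_even_gt0.
rewrite -(pmulr_rgt0 _ four_p_gt0) complete_sq.
by rewrite ltr_wpDl ?sqr_ge0 // mulr_gt0 ?subr_gt0 // exprn_even_gt0.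
Qed.

Lemma residual_form_ge0 c e l m x y :
  c ^+ 2 <= 4 * e -> e <= l -> (l - e) * (3 * l - e) <= 4 * m ->
  0 <= (l - c ^+ 2 / 4) * x ^+ 2 + c * (l - e) / 2 * x * y + (m - (l - e) ^+ 2 / 4) * y ^+ 2.
Proof.
move=> tail e_le_l m_ge.
have r_ge : (l - e) * l / 2 <= m - (l - e) ^+ 2 / 4 by nra.
have p_ge0 : 0 <= l - c ^+ 2 / 4 by nra.
have cross : c ^+ 2 / 4 * (l - e) <= 2 * l * (l - c ^+ 2 / 4) by nra.
apply: quad_form_ge0 => //; nra.
Qed.

Lemma residual_form_gt0 c e l m x y :
  c ^+ 2 <= 4 * e -> e < l -> (l - e) * (3 * l - e) <= 4 * m -> (x != 0) || (y != 0) ->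
  0 < (l - c ^+ 2 / 4) * x ^+ 2 + c * (l - e) / 2 * x * y + (m - (l - e) ^+ 2 / 4) * y ^+ 2.
Proof.
move=> tail e_lt_l m_ge xy_neq0.
have r_ge : (l - e) * l / 2 <= m - (l - e) ^+ 2 / 4 by nra.
have p_gt0 : 0 < l - c ^+ 2 / 4 by nra.
have cross : c ^+ 2 / 4 * (l - e) < 2 * l * (l - c ^+ 2 / 4) by nra.
apply: quad_form_gt0 => //; nra.
Qed.

End BinaryQuadratic.

Section GramForm.
Variables (R : realType) (a0 a1 a2 a3 : R).
Implicit Types l u v w x y : R.

Definition gram_form l u v w : R :=
  - u ^+ 2 + a3 * u * v + (a2 + l) * u * w - l * v ^+ 2 + a1 * v * w + a0 * w ^+ 2.

Lemma gram_form_monomials l x y :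
  gram_form l (x ^+ 2) (x * y) (y ^+ 2) = quartic a0 a1 a2 a3 x y.
Proof. by rewrite /gram_form /quartic; ring. Qed.

Lemma Mq_gram_form l (r : 'rV[R]_3) :
  (r *m Mq a0 a1 a2 a3 l *m r^T) 0 0 = gram_form l (r 0 0) (r 0 1) (r 0 2).
Proof.
rewrite !mxE !big_ord_recl !big_ord0 !mxE !big_ord_recl !big_ord0 !mxE /=.
have -> : lift ord0 (lift ord0 ord0) = 2 :> 'I_3 by apply: val_inj.
have -> : lift ord0 ord0 = 1 :> 'I_3 by apply: val_inj.
by rewrite /gram_form; field.
Qed.

Lemma row3_neq0 (r : 'rV[R]_3) : r != 0 -> [|| r 0 0 != 0, r 0 1 != 0 | r 0 2 != 0].
Proof.
apply: contraNT; rewrite !negb_or !negbK => /and3P[/eqP r0 /eqP r1 /eqP r2].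
apply/eqP/rowP => -[[|[|[|//]]] j_lt]; rewrite mxE;
  [rewrite -r0 | rewrite -r1 | rewrite -r2]; congr (r 0 _); exact: val_inj.
Qed.

Definition monomial_row x y : 'rV[R]_3 := \row_(j < 3) nth 0 [:: x ^+ 2; x * y; y ^+ 2] j.

Lemma monomial_row_neq0 x y : (x != 0) || (y != 0) -> monomial_row x y != 0.
Proof.
move=> xy_neq0; apply/eqP => r0; move: xy_neq0.
have /eqP := congr1 (fun r : 'rV[R]_3 => r 0 0) r0.
have /eqP := congr1 (fun r : 'rV[R]_3 => r 0 2) r0.
by rewrite !mxE /= !sqrf_eq0 => /eqP-> /eqP->; rewrite eqxx.
Qed.

Lemma Mq_monomial_row l x y :
  (monomial_row x y *m Mq a0 a1 a2 a3 l *m (monomial_row x y)^T) 0 0 = quartic a0 a1 a2 a3 x y.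
Proof. by rewrite Mq_gram_form !mxE /= gram_form_monomials. Qed.

Lemma neg_semidef_form_of_mx l :
  neg_semidef_mx (Mq a0 a1 a2 a3 l) -> neg_semidef_form (quartic a0 a1 a2 a3).
Proof.
move=> M_le0 x y xy_neq0.
by rewrite -(Mq_monomial_row l); apply/M_le0/monomial_row_neq0.
Qed.

Lemma neg_def_form_of_mx l :
  neg_def_mx (Mq a0 a1 a2 a3 l) -> neg_def_form (quartic a0 a1 a2 a3).
Proof.
move=> M_lt0 x y xy_neq0.
by rewrite -(Mq_monomial_row l); apply/M_lt0/monomial_row_neq0.
Qed.

Lemma neg_semidef_mx_of_gram l :
  (forall u v w, gram_form l u v w <= 0) -> neg_semidef_mx (Mq a0 a1 a2 a3 l).
Proof. by move=> G_le0 r _; rewrite Mq_gram_form. Qed.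

Lemma neg_def_mx_of_gram l :
  (forall u v w, [|| u != 0, v != 0 | w != 0] -> gram_form l u v w < 0) ->
  neg_def_mx (Mq a0 a1 a2 a3 l).
Proof. by move=> G_lt0 r /row3_neq0; rewrite Mq_gram_form; apply: G_lt0. Qed.

End GramForm.

Section CriticalPoint.
Variables (R : realType) (a0 a1 a2 a3 t0 : R).
Let c := 4 * t0 - a3.
Let e := 6 * t0 ^+ 2 - 3 * a3 * t0 - a2.
Let m := - quartic a0 a1 a2 a3 t0 1.
Let shift := 4 * t0 ^+ 2 - 2 * a3 * t0.
Hypothesis a1_crit : a1 = 4 * t0 ^+ 3 - 3 * a3 * t0 ^+ 2 - 2 * a2 * t0.
Hypothesis tail_ge0 : c ^+ 2 <= 4 * e.

Lemma gram_form_crit (l u v w : R) :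
  - gram_form a0 a1 a2 a3 (l - shift) u v w =
  (u - 2 * t0 * v + t0 ^+ 2 * w + c / 2 * (v - t0 * w) - (l - e) / 2 * w) ^+ 2
  + ((l - c ^+ 2 / 4) * (v - t0 * w) ^+ 2 + c * (l - e) / 2 * (v - t0 * w) * w
     + (m - (l - e) ^+ 2 / 4) * w ^+ 2).
Proof. by rewrite /gram_form /m /quartic a1_crit /c /e /shift; field. Qed.

Lemma gram_form_crit_le0 (l : R) : e <= l -> (l - e) * (3 * l - e) <= 4 * m ->
  forall u v w, gram_form a0 a1 a2 a3 (l - shift) u v w <= 0.
Proof.
move=> e_le_l m_ge u v w.
by rewrite -oppr_ge0 gram_form_crit addr_ge0 ?sqr_ge0 ?residual_form_ge0.
Qed.

Lemma gram_form_crit_lt0 (l : R) : e < l -> (l - e) * (3 * l - e) <= 4 * m ->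
  forall u v w, [|| u != 0, v != 0 | w != 0] -> gram_form a0 a1 a2 a3 (l - shift) u v w < 0.
Proof.
move=> e_lt_l m_ge u v w uvw_neq0; rewrite -oppr_gt0 gram_form_crit.
have [Vw_neq0|] := boolP ((v - t0 * w != 0) || (w != 0)).
  by rewrite ltr_wpDl ?sqr_ge0 ?residual_form_gt0.
rewrite negb_or !negbK => /andP[/eqP V0 /eqP w0].
move: V0 uvw_neq0; rewrite w0 mulr0 subr0 => ->; rewrite eqxx !orbF => u_neq0.
by rewrite !(mulr0, subr0, addr0, expr0n) /= exprn_even_gt0.
Qed.

Let S := 2 * Num.sqrt (disc a0 a1 a2 a3).

Lemma lambda0_crit : lambda0 a0 a1 a2 a3 = (2 * e + S) / 3 - shift.
Proof. by rewrite /lambda0 /b2 /S /e /shift; field. Qed.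

Lemma disc_crit : 4 * disc a0 a1 a2 a3 = e ^+ 2 + 12 * m.
Proof. by rewrite /disc /b1 /b2 /m /quartic a1_crit /e; field. Qed.

Lemma lambda0_crit_spec : 0 <= m ->
  [/\ 0 <= disc a0 a1 a2 a3, e <= S, (0 < m -> e < S) &
      ((2 * e + S) / 3 - e) * (3 * ((2 * e + S) / 3) - e) = 4 * m].
Proof.
move=> m_ge0.
have e_ge0 : 0 <= e by have := sqr_ge0 c; have := tail_ge0; lra.
have disc_ge0 : 0 <= disc a0 a1 a2 a3 by have := sqr_ge0 e; have := disc_crit; nra.
have S_ge0 : 0 <= S by rewrite mulr_ge0 ?sqrtr_ge0.
have S_sq : S ^+ 2 = e ^+ 2 + 12 * m by rewrite exprMn sqr_sqrtr // -disc_crit; ring.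
split => //; [nra | nra | ].
have -> : ((2 * e + S) / 3 - e) * (3 * ((2 * e + S) / 3) - e) = (S ^+ 2 - e ^+ 2) / 3.
  by field.
by rewrite S_sq; field.
Qed.

Lemma Mq_lambda0_neg_semidef : 0 <= m ->
  0 <= disc a0 a1 a2 a3 /\ neg_semidef_mx (Mq a0 a1 a2 a3 (lambda0 a0 a1 a2 a3)).
Proof.
move=> m_ge0; have [disc_ge0 e_le_S _ root_eq] := lambda0_crit_spec m_ge0.
split => //; apply: neg_semidef_mx_of_gram; rewrite lambda0_crit.
by apply: gram_form_crit_le0; rewrite ?root_eq //; lra.
Qed.

Lemma Mq_lambda0_neg_def : 0 < m ->
  0 <= disc a0 a1 a2 a3 /\ neg_def_mx (Mq a0 a1 a2 a3 (lambda0 a0 a1 a2 a3)).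
Proof.
move=> m_gt0; have [disc_ge0 _ e_lt_S root_eq] := lambda0_crit_spec (ltW m_gt0).
split => //; apply: neg_def_mx_of_gram; rewrite lambda0_crit.
by apply: gram_form_crit_lt0; rewrite ?root_eq //; have := e_lt_S m_gt0; lra.
Qed.

End CriticalPoint.

Lemma quartic_min_conditions (R : realType) (a0 a1 a2 a3 : R) : exists2 t0,
  a1 = 4 * t0 ^+ 3 - 3 * a3 * t0 ^+ 2 - 2 * a2 * t0 &
  (4 * t0 - a3) ^+ 2 <= 4 * (6 * t0 ^+ 2 - 3 * a3 * t0 - a2).
Proof.
pose P : {poly R} := Poly [:: - a0; - a1; - a2; - a3; 1].
have P_seq : P = [:: - a0; - a1; - a2; - a3; 1] :> seq R by rewrite (@PolyK _ 1) //= oner_neq0.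
have P_eval t : P.[t] = - quartic a0 a1 a2 a3 t 1.
  by rewrite horner_Poly /= /quartic; ring.
have P'_eval t : P^`().[t] = 4 * t ^+ 3 - 3 * a3 * t ^+ 2 - 2 * a2 * t - a1.
  by rewrite /deriv horner_poly P_seq /= !big_ord_recl big_ord0 /= /bump /=; ring.
have [t0 t0_min] : exists t0, forall t, P.[t0] <= P.[t].
  by apply: poly_has_min; rewrite /lead_coef P_seq //= ltr01.
have a1_crit : a1 = 4 * t0 ^+ 3 - 3 * a3 * t0 ^+ 2 - 2 * a2 * t0.
  by have := deriv_root_at_min t0_min; rewrite P'_eval; lra.
exists t0 => //.
apply: discr_le_of_ge0_off0 => u u_neq0.
have taylor : P.[t0 + u] - P.[t0] =
    u ^+ 2 * (u ^+ 2 + (4 * t0 - a3) * u + (6 * t0 ^+ 2 - 3 * a3 * t0 - a2)).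
  by rewrite !P_eval /quartic a1_crit; ring.
have u2_gt0 : 0 < u ^+ 2 by rewrite exprn_even_gt0.
by rewrite -(pmulr_rge0 _ u2_gt0) -taylor subr_ge0.
Qed.

Theorem corollary1 (R : realType) (a0 a1 a2 a3 : R) :
  (neg_semidef_form (quartic a0 a1 a2 a3) <->
     0 <= disc a0 a1 a2 a3 /\
     neg_semidef_mx (Mq a0 a1 a2 a3 (lambda0 a0 a1 a2 a3))) /\
  (neg_def_form (quartic a0 a1 a2 a3) <->
     0 <= disc a0 a1 a2 a3 /\
     neg_def_mx (Mq a0 a1 a2 a3 (lambda0 a0 a1 a2 a3))).
Proof.
have [t0 a1_crit tail_ge0] := quartic_min_conditions a0 a1 a2 a3.
have t0_1_neq0 : (t0 != 0) || (1 != 0 :> R) by rewrite oner_neq0 orbT.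
split; split.
- move=> f_le0; apply: Mq_lambda0_neg_semidef a1_crit tail_ge0 _.
  by rewrite oppr_ge0 f_le0.
- by case=> _; apply: neg_semidef_form_of_mx.
- move=> f_lt0; apply: Mq_lambda0_neg_def a1_crit tail_ge0 _.
  by rewrite oppr_gt0 f_lt0.
- by case=> _; apply: neg_def_form_of_mx.
Qed.
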